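(* Let $G$ be a Whitney-maximum graph in $\mathcal{C}_{n,m}$. Then: (a) for every $k\in\{1,\ldots,n\}$, $G$ is $k$-uniformly most reliable, i.e. $R_G^{(k)}(p)\ge R_H^{(k)}(p)$ for all $H\in\mathcal{C}_{n,m}$ and all $p\in[0,1]$; (b) for every $k\in\{1,\ldots,n-1\}$, $\lambda^{(k)}(G)\ge\lambda^{(k)}(H)$ for all $H\in\mathcal{C}_{n,m}$; (c) for every $k\in\{1,\ldots,n\}$, $t_k(G)\ge t_k(H)$ for all $H\in\mathcal{C}_{n,m}$.
   Context: $\mathcal{C}_{n,m}$ denotes the set of all connected simple graphs on $n$ vertices and $m$ edges. For a graph $G$ with vertex set $V$, $\kappa(G)$ is its number of connected components, $r(G)=|V|-\kappa(G)$, $c(G)=|E(G)|-|V|+\kappa(G)$. $\mathcal{S}(G)$ is the set of all spanning subgraphs of $G$. The Whitney polynomial is $W_G(x,y)=\sum_{H\in\mathcal{S}(G)}x^{r(G)-r(H)}y^{c(H)}$. A bivariate polynomial is nonnegative if all its coefficients are nonnegative real numbers. $G\in\mathcal{C}_{n,m}$ is Whitney-maximum if for every $H\in\mathcal{C}_{n,m}$ there is a nonnegative polynomial $Q_H$ with $W_G(x,y)-W_H(x,y)=(1-xy)Q_H(x,y)$. $N_i^{(k)}(G)$ is the number of spanning subgraphs of $G$ with exactly $i$ edges and at most $k$ connected components. The $k$-reliability $R_G^{(k)}(p)=\sum_{i=0}^m N_i^{(k)}(G)p^i(1-p)^{m-i}$ is the probability that $G$ has at most $k$ connected components when each edge is independently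 retained with probability $p$. The $k$-order edge connectivity $\lambda^{(k)}(G)$ is the minimum number of edges whose removal from $G$ yields a spanning subgraph with more than $k$ connected components. $t_k(G)$ is the number of spanning forests of $G$ consisting of exactly $k$ trees. *)

From HB Require Import structures.
From mathcomp Require Import all_boot all_order all_algebra.
From mathcomp Require Import reals.
Set Implicit Arguments. Unset Strict Implicit. Unset Printing Implicit Defensive.
Import Order.TTheory GRing.Theory Num.Theory.

Local Open Scope ring_scope.
Section Graphs.
Variable n : nat.
Implicit Types (E F : {set {set 'I_n}}).

Definition simple_graph E : bool := [forall e in E, #|e| == 2%N].

Definition adj F : rel 'I_n := fun x y => (x != y) && ([set x; y] \in F).

Definition kappa F : nat :=
  #|[set [set y | connect (adj F) x y] | x in 'I_n]|.

Definition connectedb E : bool := [forall x, forall y, connect (adj E) x y].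

Definition rank F : nat := n - kappa F.
Definition corank F : nat := #|F| + kappa F - n.

Definition inC (m : nat) E : bool := [&& simple_graph E, (#|E| == m)%N & connectedb E].

(* Whitney polynomial as an element of R[x][y]: x = 'X%:P, y = 'X *)
Definition whitney (R : nzRingType) E : {poly {poly R}} :=
  \sum_(F in powerset E) (('X%:P) ^+ (rank E - rank F) * 'X ^+ (corank F)).

Definition nonneg_bipoly (R : realDomainType) (Q : {poly {poly R}}) : Prop :=
  forall i j, 0 <= (Q`_i)`_j.

Definition whitney_max (R : realDomainType) (m : nat) G : Prop :=
  forall H, inC m H -> exists Q : {poly {poly R}},
    nonneg_bipoly Q /\ whitney R G - whitney R H = (1 - ('X%:P) * 'X) * Q.

Definition Nik (i k : nat) E : nat :=
  #|[set F in powerset E | (#|F| == i)%N && (kappa F <= k)%N]|.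

Definition kreliab (R : nzRingType) (k : nat) E (p : R) : R :=
  \sum_(i < #|E|.+1) (Nik i k E)%:R * p ^+ i * (1 - p) ^+ (#|E| - i).

Definition lambdak (k : nat) E : nat :=
  \big[minn/#|E|]_(F in powerset E | (k < kappa (E :\: F))%N) #|F|.

Definition has_cycle F : bool :=
  [exists l : 'I_n.+1, (2 < l)%N &&
     [exists t : l.-tuple 'I_n, uniq t && cycle (adj F) t]].

Definition forestb F : bool := ~~ has_cycle F.

Definition tk (k : nat) E : nat :=
  #|[set F in powerset E | forestb F && (kappa F == k)%N]|.

End Graphs.

From HB Require Import structures.
From mathcomp Require Import all_boot all_order all_algebra.
From mathcomp Require Import reals.
From mathcomp Require Import zify.
Import Order.TTheory GRing.Theory Num.Theory.

(* Multiplying by S_M = \sum_(s <= M) (xy)^s inverts 1 - xy up to y-degree M, so each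
   coefficient of Q in W_G - W_H = (1 - xy) Q is the difference of the corresponding
   coefficients of W_G S_M and W_H S_M.  For a connected graph E on n vertices the
   coefficient of x^(k-1) y^(c+k-n) in W_E S_M is N_c^(k)(E), because x^(r(E)-r(F)) y^(c(F))
   lands there after multiplication by a power of xy iff |F| = c and kappa(F) <= k.
   Nonnegativity of Q therefore gives N_c^(k)(H) <= N_c^(k)(G) for all c and k, and the
   three claims follow: R^(k) is a nonnegative combination of the N_c^(k); some c-edge
   spanning subgraph has more than k components iff N_c^(k) < binomial(m, c), so every
   cut size realised in G is realised in H; and t_k = N_(n-k)^(k), since a spanning
   subgraph is a forest iff |F| + kappa(F) = n. *)

Set Implicit Arguments.
Unset Strict Implicit.
Unset Printing Implicit Defensive.

Lemma geq_bigmin_cond (I : finType) (P : pred I) (f : I -> nat) s j :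
  P j -> (\big[minn/s]_(i | P i) f i <= f j)%N.
Proof.
move=> Pj; have : j \in index_enum I := mem_index_enum j.
elim: (index_enum I) => [// | i r IHr]; rewrite inE big_cons.
case/predU1P => [<- | jr]; first by rewrite Pj geq_minl.
by case: (P i); rewrite ?geq_min IHr ?orbT.
Qed.

Section SpanningSubgraphs.
Variable n : nat.
Implicit Types (E F G H X : {set {set 'I_n}}) (u v x y : 'I_n).

Definition component F x := [set y | connect (adj F) x y].

Lemma kappaE F : kappa F = #|[set component F x | x in 'I_n]|.
Proof. by []. Qed.

Lemma adj_sym F : symmetric (adj F).
Proof. by move=> x y; rewrite /adj eq_sym setUC. Qed.

Lemma connect_adj_sym F : connect_sym (adj F).
Proof. exact/sym_connect_sym/adj_sym. Qed.

Lemma eq_component F x y : (component F x == component F y) = connect (adj F) x y.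
Proof.
apply/eqP/idP => [eq_xy | xy].
  by have := connect0 (adj F) y; rewrite -inE -/(component F y) -eq_xy inE.
apply/setP => z; rewrite !inE; apply/idP/idP; last exact: connect_trans.
by apply: connect_trans; rewrite connect_adj_sym.
Qed.

Lemma adj_subset F F' : F \subset F' -> subrel (adj F) (adj F').
Proof. by move=> sFF' x y /andP[xy /(subsetP sFF') xyF']; rewrite /adj xy. Qed.

Lemma connect_subset F F' x y :
  F \subset F' -> connect (adj F) x y -> connect (adj F') x y.
Proof. by move=> sFF'; apply: connect_sub => a b /(adj_subset sFF')/connect1. Qed.

Lemma eq_set2 u v x y : u != v -> [set u; v] = [set x; y] ->
  (u = x /\ v = y) \/ (u = y /\ v = x).
Proof.
move=> uv /setP eq_uv.
have := eq_uv u; have := eq_uv v; have := eq_uv x; rewrite !inE !eqxx /= orbT.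
move=> /orP[]/eqP xu /esym/orP[]/eqP vxy /esym/orP[]/eqP uxy; subst;
  by [left | right | rewrite eqxx in uv].
Qed.

(* A path in [F + uv] either avoids uv, or crosses it once; the three-way
   disjunction is closed under edges of [F + uv], hence under [connect]. *)
Lemma connect_setU1 F u v x y : connect (adj ([set u; v] |: F)) x y ->
  [|| connect (adj F) x y,
      connect (adj F) x u && connect (adj F) v y |
      connect (adj F) x v && connect (adj F) u y].
Proof.
pose reach := [pred z | [|| connect (adj F) x z,
  connect (adj F) x u && connect (adj F) v z |
  connect (adj F) x v && connect (adj F) u z]].
have closed_reach : closed (adj ([set u; v] |: F)) reach.
  apply: intro_closed; first exact: connect_adj_sym.
  move=> c z /andP[cz]; rewrite inE => /orP[/set1P/(eq_set2 cz) | cz_in_F].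
    by case=> -[-> ->] /or3P[xc | /andP[xu _] | /andP[xv _]];
      rewrite inE ?xc ?xu ?xv connect0 /= ?orbT.
  have {}cz : connect (adj F) c z by apply: connect1; rewrite /adj cz.
  case/or3P=> [xc | /andP[xu vc] | /andP[xv uc]]; rewrite inE.
  - by rewrite (connect_trans xc cz).
  - by rewrite xu (connect_trans vc cz) orbT.
  - by rewrite xv (connect_trans uc cz) !orbT.
move=> xy; suff: y \in reach by [].
by rewrite -(closed_connect closed_reach xy) inE connect0.
Qed.

Lemma component_setU1 F u v : connect (adj F) u v ->
  component ([set u; v] |: F) =1 component F.
Proof.
move=> uv x; apply/setP => y; rewrite !inE; apply/idP/idP; last first.
  by apply: connect_subset; apply: subsetUr.
move/connect_setU1/or3P => [// | /andP[xu vy] | /andP[xv uy]].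
  by rewrite (connect_trans xu) // (connect_trans uv).
by rewrite (connect_trans xv) // (connect_trans _ uy) // connect_adj_sym.
Qed.

Lemma kappa_setU1 F u v : u != v ->
  kappa F = kappa ([set u; v] |: F) + ~~ connect (adj F) u v.
Proof.
move=> neq_uv; set F' := [set u; v] |: F.
have [uv | not_uv] := boolP (connect (adj F) u v).
  by rewrite addn0 !kappaE (eq_imset _ (component_setU1 uv)).
pose merge (C : {set 'I_n}) :=
  if [pick z in C] is Some z then component F' z else set0.
have merge_component x : merge (component F x) = component F' x.
  rewrite /merge; case: pickP => [z | /(_ x)]; rewrite inE ?connect0 // => xz.
  apply/eqP; rewrite eq_component connect_adj_sym.
  by apply: connect_subset xz; apply: subsetUr.
set S := [set component F x | x in 'I_n].
have uS : component F u \in S by apply: imset_f.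
have vS : component F v \in S :\ component F u.
  by rewrite !inE imset_f // andbT eq_component connect_adj_sym.
have merge_uv : merge (component F u) = merge (component F v).
  rewrite !merge_component; apply/eqP; rewrite eq_component.
  by apply: connect1; rewrite /adj neq_uv !inE eqxx.
have -> : kappa F' = #|merge @: (S :\ component F u)|.
  rewrite kappaE; have -> : [set component F' x | x in 'I_n] = merge @: S.
    apply/setP => C; apply/imsetP/imsetP => [[x _ ->] | [_ /imsetP[x _ ->] ->]].
      by exists (component F x); rewrite ?imset_f ?merge_component.
    by exists x; rewrite ?merge_component.
  rewrite -{1}(setD1K uS) imsetU1 merge_uv.
  by have /setUidPr-> : [set merge (component F v)] \subset merge @: (S :\ component F u);
    rewrite // sub1set imset_f.
rewrite kappaE (cardsD1 (component F u) S) uS addnC /= card_in_imset //.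
move=> C D /setD1P[ne_x /imsetP[x _ eq_x]] /setD1P[ne_y /imsetP[y _ eq_y]].
rewrite {}eq_x {}eq_y in ne_x ne_y *.
rewrite !merge_component => /eqP; rewrite eq_component.
case/connect_setU1/or3P => [xy | /andP[xu _] | /andP[_ uy]].
- by apply/eqP; rewrite eq_component.
- by rewrite eq_component xu in ne_x.
- by rewrite eq_sym eq_component uy in ne_y.
Qed.

Lemma kappa_set0 : kappa (set0 : {set {set 'I_n}}) = n.
Proof.
have component0 x : component set0 x = [set x].
  apply/setP => y; rewrite !inE; apply/idP/eqP => [/connectP[[|z p] /=] | ->].
  - by move=> _ ->.
  - by rewrite /adj inE andbF.
  - exact: connect0.
by rewrite kappaE (eq_imset _ component0) card_imset ?card_ord //; apply: set1_inj.
Qed.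

Lemma kappa_le F : (kappa F <= n)%N.
Proof. by rewrite kappaE -[n in (_ <= n)%N]card_ord leq_imset_card. Qed.

Lemma kappa_gt0 F : (0 < n)%N -> (0 < kappa F)%N.
Proof.
move=> n_gt0; rewrite kappaE card_gt0; apply/set0Pn.
by exists (component F (Ordinal n_gt0)); apply: imset_f.
Qed.

Lemma kappa_connected F : (0 < n)%N -> connectedb F -> kappa F = 1%N.
Proof.
move=> n_gt0 /forallP conF.
have componentT x : component F x = [set: 'I_n].
  by apply/setP => y; rewrite !inE; apply: (forallP (conF x)).
rewrite kappaE (eq_imset _ componentT) -(cards1 [set: 'I_n]); apply: eq_card => C.
by rewrite inE; apply/imsetP/eqP => [[] | ->] //; exists (Ordinal n_gt0).
Qed.

Lemma simple_graph_subset F F' : F \subset F' -> simple_graph F' -> simple_graph F.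
Proof.
by move=> sFF' /forall_inP simpleF'; apply/forall_inP => e /(subsetP sFF')/simpleF'.
Qed.

Lemma simple_graph_ind (P : {set {set 'I_n}} -> Prop) :
  P set0 ->
  (forall F u v, u != v -> [set u; v] \notin F -> simple_graph F -> P F ->
     P ([set u; v] |: F)) ->
  forall F, simple_graph F -> P F.
Proof.
move=> P0 PU1 F; have [N] := ubnP #|F|; elim: N F => // N IHN F ltFN simpleF.
have [-> // | [e eF]] := set_0Vmem F.
have /cards2P[u [v [neq_uv e_uv]]] := forall_inP simpleF e eF.
have simpleFe : simple_graph (F :\ e) := simple_graph_subset (subD1set F e) simpleF.
rewrite -(setD1K eF) e_uv; apply: PU1; rewrite -?e_uv ?setD11 //.
by apply: IHN; rewrite // -ltnS (leq_trans _ ltFN) // (cardsD1 e F) eF.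
Qed.

Lemma card_add_kappa_ge F : simple_graph F -> (n <= #|F| + kappa F)%N.
Proof.
elim/simple_graph_ind => [|{}F u v neq_uv uvF _ IHF]; first by rewrite cards0 kappa_set0.
by move: IHF; rewrite (kappa_setU1 F neq_uv) cardsU1 uvF; case: (~~ _) => /=; lia.
Qed.

Lemma has_cycle_subset F F' : F \subset F' -> has_cycle F -> has_cycle F'.
Proof.
move=> sFF' /existsP[l /andP[l_gt2 /existsP[t /andP[uniq_t cycle_t]]]].
apply/existsP; exists l; rewrite l_gt2; apply/existsP; exists t.
by rewrite uniq_t (sub_cycle (adj_subset sFF')).
Qed.

Lemma adj_setD1 F e x y : adj (F :\ e) x y = adj F x y && ([set x; y] != e).
Proof. by rewrite /adj in_setD1 andbCA andbC. Qed.

(* A cycle [x, y, q..] gives the edge xy together with the path [y, q.., x]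
   avoiding it; conversely a shortest such path closes up into a cycle. *)
Lemma has_cycleP F : reflect
  (exists x y, [/\ x != y, [set x; y] \in F & connect (adj (F :\ [set x; y])) x y])
  (has_cycle F).
Proof.
apply: (iffP existsP) => [[l /andP[l_gt2 /existsP[t /andP[]]]] | ].
  have := size_tuple t; case: (tval t) => [|x [|y [|z q]]] size_t;
    try by rewrite -size_t in l_gt2.
  rewrite /= !inE !negb_or => /and4P[/and3P[xy xz xq] /andP[yz yq] _ _].
  move=> cycle_t; have /andP[/[dup] /andP[_ xyF] adj_xy] :
    adj F x y && path (adj F) y (rcons (z :: q) x) := cycle_t.
  rewrite rcons_path => /andP[path_yzq adj_lx].
  exists x, y; split; rewrite // connect_adj_sym; apply/connectP.
  exists (rcons (z :: q) x); last by rewrite last_rcons.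
  rewrite rcons_path; apply/andP; split.
    have avoid_x : {in predC1 x &, subrel (adj F) (adj (F :\ [set x; y]))}.
      move=> a b; rewrite !inE => ax bx ab; rewrite adj_setD1 ab.
      apply: contraNneq (ax) => /setP/(_ x); rewrite !inE eqxx /=.
      by case/orP=> /eqP xab; [rewrite xab | rewrite xab eqxx in bx].
    apply: (sub_in_path avoid_x) path_yzq.
    by rewrite /= eq_sym xy eq_sym xz; apply/allP => w /=; apply: contraTneq => ->.
  rewrite adj_setD1 adj_lx /=.
  have ly : last z q != y by apply: contraTneq (mem_last z q) => ->; rewrite inE negb_or yz.
  apply: contraNneq ly => /setP/(_ y); rewrite !inE eqxx orbT.
  by case/orP=> /eqP yab; [rewrite yab | rewrite yab eqxx in xy].
case=> x [y [neq_xy xyF /connectP[p path_p]]].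
case: (shortenP path_p) => p' path_p' uniq_p' _ {p path_p}.
case: p' path_p' uniq_p' => [|w [|z q]] path_p' uniq_p' y_last.
- by move: y_last neq_xy => /= ->; rewrite eqxx.
- by move: y_last path_p' => /= ->; rewrite andbT adj_setD1 eqxx andbF.
have size_lt : (size [:: x, w, z & q] < n.+1)%N.
  by rewrite ltnS -(card_uniqP uniq_p') -[n in (_ <= n)%N]card_ord max_card.
exists (Ordinal size_lt) => //; apply/existsP; exists (in_tuple [:: x, w, z & q]).
rewrite uniq_p'; change (path (adj F) x (rcons [:: w, z & q] x)).
rewrite rcons_path -y_last (sub_path (adj_subset (subD1set F [set x; y])) path_p').
by rewrite adj_sym /adj neq_xy.
Qed.

Lemma forest_card_kappa F : simple_graph F -> forestb F = (#|F| + kappa F == n).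
Proof.
move=> simpleF; apply/idP/idP; last first.
  apply: contraLR; rewrite negbK => /has_cycleP[x [y [neq_xy xyF conF]]].
  have := kappa_setU1 (F :\ [set x; y]) neq_xy; rewrite conF setD1K // addn0 => <-.
  have := card_add_kappa_ge (simple_graph_subset (subD1set F [set x; y]) simpleF).
  by rewrite (cardsD1 [set x; y] F) xyF add1n neq_ltn ltnS => ->; rewrite orbT.
move: simpleF; elim/simple_graph_ind => [|{}F u v neq_uv uvF _ IHF forestF'].
  by rewrite cards0 kappa_set0.
have forestF : forestb F by apply: contra forestF'; apply/has_cycle_subset/subsetUr.
have not_uv : ~~ connect (adj F) u v.
  apply: contra forestF' => uv; apply/has_cycleP; exists u, v.
  by rewrite setU1K // !inE eqxx.
by move: (IHF forestF); rewrite (kappa_setU1 F neq_uv) not_uv cardsU1 uvF; lia.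
Qed.

Lemma Nik_eq0 E c k : simple_graph E -> (c + k < n)%N -> Nik c k E = 0%N.
Proof.
move=> simpleE lt_ckn; apply/eqP; rewrite cards_eq0; apply/eqP/setP => F.
rewrite !inE; apply/negP => /andP[FE /andP[/eqP cardF kappaF]].
by have := card_add_kappa_ge (simple_graph_subset FE simpleE); lia.
Qed.

Lemma tk_Nik E k : simple_graph E -> (k <= n)%N -> tk k E = Nik (n - k) k E.
Proof.
move=> simpleE le_kn; apply: eq_card => F; rewrite !inE.
have [FE | //] := boolP (F \subset E); have simpleF := simple_graph_subset FE simpleE.
rewrite /= forest_card_kappa //; have := card_add_kappa_ge simpleF.
move: #|F| (kappa F) => a b ge_n.
by apply/andP/andP => [[/eqP sum_n /eqP kF] | [/eqP cardF kF]]; split; try apply/eqP; lia.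
Qed.

Lemma Nik_lt_binomial E c k : reflect
  (exists2 X : {set {set 'I_n}}, X \subset E & (#|X| == c) && (k < kappa X)%N)
  (Nik c k E < 'C(#|E|, c))%N.
Proof.
rewrite -cards_draws /Nik.
have sub_draws : [set X in powerset E | (#|X| == c) && (kappa X <= k)%N]
    \subset [set X : {set {set 'I_n}} | X \subset E & #|X| == c].
  by apply/subsetP => X; rewrite !inE => /andP[-> /andP[-> _]].
rewrite (ltn_leqif (subset_leqif_card sub_draws)).
apply: (iffP subsetPn) => -[X].
  by rewrite !inE => /andP[XE cX]; rewrite XE cX -ltnNge; exists X; rewrite ?cX.
by move=> XE /andP[cX kX]; exists X; rewrite !inE XE cX -?ltnNge.
Qed.

Lemma lambdak_le_of_Nik k G H : #|H| = #|G| ->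
  (forall c, Nik c k H <= Nik c k G)%N -> (lambdak k H <= lambdak k G)%N.
Proof.
move=> cardHG NikHG; rewrite {2}/lambdak.
apply: (big_ind (fun b => lambdak k H <= b)%N) => [|a b le_a le_b|F].
- rewrite -cardHG; apply: (big_ind (fun b => b <= #|H|)%N) => // [a b le_a _ | F].
    by rewrite geq_min le_a.
  by rewrite inE => /andP[/subset_leq_card].
- by rewrite leq_min le_a le_b.
rewrite inE => /andP[FG kF]; set c := #|G :\: F|.
have : (Nik c k G < 'C(#|G|, c))%N.
  by apply/Nik_lt_binomial; exists (G :\: F); rewrite ?subsetDl ?eqxx.
rewrite -cardHG => /(leq_ltn_trans (NikHG c))/Nik_lt_binomial[X XH /andP[/eqP cX kX]].
have -> : #|F| = #|H :\: X|.
  rewrite cardsD (setIidPr XH) cX /c cardsD (setIidPr FG) cardHG.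
  by have := subset_leq_card FG; lia.
apply: geq_bigmin_cond; rewrite inE subsetDl.
by rewrite setDDr setDv set0U (setIidPr XH).
Qed.

End SpanningSubgraphs.

Local Open Scope ring_scope.

Section WhitneyCoefficients.
Variable R : comNzRingType.

Definition bimonomial (a b : nat) : {poly {poly R}} := 'X%:P ^+ a * 'X ^+ b.

Definition diag_geom (M : nat) : {poly {poly R}} := \sum_(s < M.+1) bimonomial s s.

Lemma coef_bimonomial a b i j : ((bimonomial a b)`_j)`_i = ((j == b) && (i == a))%:R.
Proof.
rewrite /bimonomial -rmorphXn /= coefCM coefXn.
by case: (j == b); rewrite ?mulr1 ?mulr0 ?coef0 ?coefXn.
Qed.

Lemma bimonomialM a b c d : bimonomial a b * bimonomial c d = bimonomial (a + c) (b + d).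
Proof. by rewrite /bimonomial mulrACA -!exprD. Qed.

Lemma mul_diag_geom M : (1 - 'X%:P * 'X) * diag_geom M = 1 - bimonomial M.+1 M.+1.
Proof.
have bimonomial_diag s : bimonomial s s = ('X%:P * 'X) ^+ s by rewrite exprMn.
rewrite /diag_geom bimonomial_diag; under eq_bigr => s _ do rewrite bimonomial_diag.
by apply: oppr_inj; rewrite opprB subrX1 -mulNr opprB.
Qed.

Lemma coef_bimonomial_diag_geom a b M i j : (j <= M)%N ->
  ((bimonomial a b * diag_geom M)`_j)`_i = ((a <= i) && (b <= j) && (i - a == j - b))%N%:R.
Proof.
move=> le_jM; rewrite mulr_sumr !coef_sum.
under eq_bigr => s _ do rewrite bimonomialM coef_bimonomial.
have [/andP[/andP[le_ai le_bj] /eqP eq_ij] | neq_ij] :=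
  boolP ((a <= i) && (b <= j) && (i - a == j - b))%N.
  have lt_s : (j - b < M.+1)%N by lia.
  rewrite (bigD1 (Ordinal lt_s)) //= big1 ?addr0.
    by rewrite subnKC // -eq_ij subnKC // !eqxx.
  move=> s /eqP neq_s; case: eqP => //= j_bs; case: eqP => // _.
  by case: neq_s; apply: val_inj; rewrite /= j_bs addKn.
apply: big1 => s _; case: eqP => //= j_bs; case: eqP => //= i_as.
rewrite {}j_bs {}i_as in neq_ij.
by move: neq_ij; rewrite !leq_addr !addKn eqxx.
Qed.

Lemma coef_factor_diag_geom (D Q : {poly {poly R}}) M i j : (j <= M)%N ->
  D = (1 - 'X%:P * 'X) * Q -> (Q`_j)`_i = ((D * diag_geom M)`_j)`_i.
Proof.
move=> le_jM ->; rewrite mulrAC mulrC mul_diag_geom mulrBr mulr1 coefB.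
by rewrite /bimonomial mulrA coefMXn ltnS le_jM subr0.
Qed.

(* By [kappa E = 1], [x^(r(E)-r(F)) y^(c(F))] is shifted onto [x^(k-1) y^(c+k-n)] by a
   power of [xy] exactly when [|F| = c] and [kappa F <= k]. *)
Lemma coef_whitney_diag_geom n (E : {set {set 'I_n}}) c k :
  (0 < n)%N -> (1 <= k)%N -> (n <= c + k)%N -> simple_graph E -> connectedb E ->
  ((whitney R E * diag_geom (c + k - n))`_(c + k - n))`_k.-1 = (Nik c k E)%:R.
Proof.
move=> n_gt0 k_gt0 le_n_ck simpleE conE.
rewrite /whitney mulr_suml !coef_sum.
under eq_bigr => F _ do rewrite coef_bimonomial_diag_geom //.
rewrite /Nik -sum1dep_card big_mkcondr -natr_sum; apply: congr1; apply: eq_bigr => F.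
rewrite inE => FE; have simpleF := simple_graph_subset FE simpleE.
have := kappa_le F; have := kappa_gt0 F n_gt0; have := card_add_kappa_ge simpleF.
rewrite /rank /corank (kappa_connected n_gt0 conE).
move: #|F| (kappa F) => a b ge_n b_gt0 le_bn; apply: (congr1 nat_of_bool).
apply/idP/idP => [/andP[/andP[le_b le_a] /eqP eq_ab] | /andP[/eqP eq_a le_bk]].
  by apply/andP; split; [apply/eqP|]; lia.
by apply/andP; split; [apply/andP; split | apply/eqP]; lia.
Qed.

End WhitneyCoefficients.

Lemma Nik_le_of_whitney_factor (R : realDomainType) n (G H : {set {set 'I_n}})
    (Q : {poly {poly R}}) c k :
  simple_graph G -> connectedb G -> simple_graph H -> connectedb H ->
  nonneg_bipoly Q -> whitney R G - whitney R H = (1 - 'X%:P * 'X) * Q ->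
  (1 <= k <= n)%N -> (Nik c k H <= Nik c k G)%N.
Proof.
move=> simpleG conG simpleH conH Q_ge0 eqGHQ /andP[k_gt0 le_kn].
have n_gt0 : (0 < n)%N by apply: leq_trans le_kn.
have [lt_ckn | le_nck] := ltnP (c + k) n; first by rewrite Nik_eq0.
have := Q_ge0 (c + k - n)%N k.-1.
rewrite (coef_factor_diag_geom _ (leqnn _) eqGHQ) mulrBl coefB coefB.
by rewrite !coef_whitney_diag_geom // subr_ge0 ler_nat.
Qed.

Lemma kreliab_le_of_Nik (R : numDomainType) n (G H : {set {set 'I_n}}) k (p : R) :
  #|H| = #|G| -> (forall i, Nik i k H <= Nik i k G)%N -> 0 <= p <= 1 ->
  kreliab k H p <= kreliab k G p.
Proof.
move=> cardHG NikHG /andP[p_ge0 p_le1]; rewrite /kreliab cardHG; apply: ler_sum => i _.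
by rewrite ler_wpM2r ?exprn_ge0 ?subr_ge0 // ler_wpM2r ?exprn_ge0 // ler_nat.
Qed.

Theorem mainTheorem7 (R : realType) (n m : nat) (G : {set {set 'I_n}}) :
  inC m G -> whitney_max R m G ->
  (forall k : nat, (1 <= k <= n)%N ->
     forall H : {set {set 'I_n}}, inC m H ->
     forall p : R, 0 <= p <= 1 -> kreliab k H p <= kreliab k G p) /\
  (forall k : nat, (1 <= k <= n.-1)%N ->
     forall H : {set {set 'I_n}}, inC m H -> (lambdak k H <= lambdak k G)%N) /\
  (forall k : nat, (1 <= k <= n)%N ->
     forall H : {set {set 'I_n}}, inC m H -> (tk k H <= tk k G)%N).
Proof.
move=> /and3P[simpleG /eqP cardG conG] maxG.
have Nik_le (H : {set {set 'I_n}}) c k :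
    inC m H -> (1 <= k <= n)%N -> (Nik c k H <= Nik c k G)%N.
  move=> C_H; have [Q [Q_ge0 eqGHQ]] := maxG H C_H.
  by case/and3P: C_H => simpleH _ conH; apply: Nik_le_of_whitney_factor eqGHQ.
have cardHG (H : {set {set 'I_n}}) : inC m H -> #|H| = #|G| by case/and3P => _ /eqP -> _.
split; [|split] => k k_range H C_H.
- by move=> p; apply: kreliab_le_of_Nik (cardHG H C_H) _ => i; apply: Nik_le.
- apply: lambdak_le_of_Nik (cardHG H C_H) _ => c; apply: Nik_le => //.
  by case/andP: k_range => -> /leq_trans->; rewrite ?leq_pred.
- have /and3P[simpleH _ _] := C_H; have /andP[_ le_kn] := k_range.
  by rewrite !tk_Nik //; apply: Nik_le.
Qed.
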